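(* Let $H=(V,E)$ be a hypergraph such that the digraph $\mathcal D_3(H)$ has a non-trivial spanning arborescence. Then $H$ is eulerian.
   Context: A hypergraph $H=(V,E)$ consists of a finite nonempty vertex set $V$, a finite edge set $E$ disjoint from $V$, and an incidence function assigning to each edge $e\in E$ a subset of $V$ (also denoted $e$); distinct edges may have the same vertex set. Hypergraphs are assumed to have no empty edges. A walk is a sequence $W=v_0e_1v_1e_2\cdots e_kv_k$ with $v_i\in V$, $e_i\in E$, such that for each $i$, $v_{i-1}\ne v_i$ and $v_{i-1},v_i\in e_i$. $W$ is closed if $k\ge 2$ and $v_0=v_k$; it is a strict trail if $e_1,\dots,e_k$ are pairwise distinct. An Euler tour of $H$ is a closed strict trail traversing every edge of $H$; $H$ is eulerian if it has one. $\mathcal D_3(H)$ is the digraph with vertex set $E$ and arc set $\{(e,f): e,f\in E,\ |f\setminus e|=1,\ |e\cap f|\ge 3\}$. An arborescence is a digraph whose underlying undirected graph is a tree and whose arcs are all directed towards a root; it is non-trivial if it has at least two vertices. *)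

From mathcomp Require Import all_boot.
Set Implicit Arguments. Unset Strict Implicit. Unset Printing Implicit Defensive.

(* A hypergraph H = (V, E) is given by finite types V (vertices) and E (edges)
   together with an incidence function inc : E -> {set V}. Distinct edges may
   have the same vertex set. *)
Definition hypergraph_ok (V E : finType) (inc : E -> {set V}) : Prop :=
  0 < #|V| /\ (forall e : E, inc e != set0).

(* A walk v0 e1 v1 ... ek vk is represented by its start vertex v0 and the
   sequence [:: (e1,v1); ...; (ek,vk)]. *)
Fixpoint walk_from (V E : finType) (inc : E -> {set V}) (v : V)
    (s : seq (E * V)) : bool :=
  match s with
  | [::] => true
  | (e, w) :: s' => [&& v != w, v \in inc e, w \in inc e & walk_from inc w s']
  end.

Definition closed_walk (V E : finType) (inc : E -> {set V}) (v0 : V)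
    (s : seq (E * V)) : bool :=
  walk_from inc v0 s && (2 <= size s) && (last v0 (map snd s) == v0).

Definition strict_trail (V E : finType) (inc : E -> {set V}) (v0 : V)
    (s : seq (E * V)) : bool :=
  walk_from inc v0 s && uniq (map fst s).

Definition euler_tour (V E : finType) (inc : E -> {set V}) (v0 : V)
    (s : seq (E * V)) : bool :=
  [&& closed_walk inc v0 s, strict_trail inc v0 s &
      all (fun e => e \in map fst s) (enum E)].

Definition eulerian (V E : finType) (inc : E -> {set V}) : Prop :=
  exists (v0 : V) (s : seq (E * V)), euler_tour inc v0 s.

Definition D3 (V E : finType) (inc : E -> {set V}) : rel E :=
  fun e f => (#|inc f :\: inc e| == 1) && (3 <= #|inc e :&: inc f|).

Definition spanning_arborescence (T : finType) (D : rel T) (A : rel T) (r : T)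
  : Prop :=
  [/\ (forall x y, A x y -> D x y),
      (forall y, ~~ A r y),
      (forall x, x != r -> #|[set y | A x y]| = 1) &
      (forall x, connect A x r)].

Definition has_nontrivial_spanning_arborescence (T : finType) (D : rel T)
  : Prop :=
  2 <= #|T| /\ exists (A : rel T) (r : T), spanning_arborescence D A r.

(* An arc (a, b) of D_3(H) lets a closed strict trail through b absorb a: if
   the trail traverses b as u b w, pick x in a \cap b other than u and w (there
   are at least three common vertices); since b \ a is a single vertex, one of
   u, w lies in a, and u b w is replaced by u b x a w or u a x b w. Two edges
   joined by an arc already form a closed trail u a x b u. Starting from an arc
   into the root r, every edge e missing from the trail has an arborescence
   path to r, which enters the trail along some arc (a, b); absorbing a, the
   trail grows until it is an Euler tour. *)
From mathcomp Require Import all_boot.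
From mathcomp Require Import zify.

Set Implicit Arguments.
Unset Strict Implicit.
Unset Printing Implicit Defensive.

Lemma card_ge3_avoid2 (T : finType) (A : {set T}) (v w : T) :
  3 <= #|A| -> exists2 x, x \in A & (x != v) && (x != w).
Proof.
move=> A_ge3; have : ~~ (A \subset [set v; w]).
  by apply/negP => /subset_leq_card; rewrite cards2; case: (v != w) => /=; lia.
by case/subsetPn => x xA; rewrite !inE negb_or; exists x.
Qed.

Lemma connect_cross (T : finType) (A : rel T) (S : pred T) (x y : T) :
  connect A x y -> x \notin S -> y \in S ->
  exists a b, [/\ a \notin S, b \in S & A a b].
Proof.
case/connectP=> p + ->; elim: p x => [|z p IHp] x //=; first by move=> _ /negPf->.
case/andP=> Axz zp xS; case: (boolP (z \in S)) => [zS | /(IHp z zp)//].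
by exists x, z.
Qed.

Section Hypergraph.

Variables (V E : finType) (inc : E -> {set V}).

Lemma walk_insert_D3 (a b : E) (v : V) (T : seq (E * V)) :
  D3 inc a b -> walk_from inc v T -> b \in map fst T ->
  exists T', [/\ walk_from inc v T', last v (map snd T') = last v (map snd T)
               & perm_eq (map fst T') (a :: map fst T)].
Proof.
case/andP=> /cards1P[z ba_z] ab_ge3.
elim: T v => [|[g w] T IHT] v //=; case/and4P=> vw vg wg wT.
rewrite in_cons => /orP[/eqP gb | bT]; last first.
  have [T' [wT' lastT' permT']] := IHT w wT bT.
  exists ((g, w) :: T'); split=> //=; first by rewrite vw vg wg.
  by apply: perm_trans (permEl (perm_catCA [:: g] [:: a] _)); rewrite perm_cons.
subst g; have [x] := card_ge3_avoid2 v w ab_ge3.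
rewrite inE => /andP[xa xb] /andP[xv xw].
have [wa | wNa] := boolP (w \in inc a).
  exists [:: (b, x), (a, w) & T]; split=> //=.
    by rewrite eq_sym xv vg xb xw xa wa wT.
  exact: permEl (perm_catCA [:: b] [:: a] _).
have va : v \in inc a.
  apply: contraNT vw => vNa; have : w \in inc b :\: inc a by rewrite inE wNa wg.
  have : v \in inc b :\: inc a by rewrite inE vNa vg.
  by rewrite ba_z !inE => /eqP-> /eqP->.
exists [:: (a, x), (b, w) & T]; split=> //=.
by rewrite eq_sym xv va xa xw xb wg wT.
Qed.

Lemma closed_trail_of_D3 (a b : E) :
  a != b -> D3 inc a b ->
  exists v0 T, [/\ closed_walk inc v0 T, strict_trail inc v0 T
                 & map fst T = [:: a; b]].
Proof.
move=> ab /andP[_ ab_ge3].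
have [u] : exists u, u \in inc a :&: inc b.
  by apply/set0Pn; rewrite -card_gt0; lia.
rewrite inE => /andP[ua ub].
have [x] := card_ge3_avoid2 u u ab_ge3; rewrite inE andbb => /andP[xa xb] xu.
exists u, [:: (a, x); (b, u)].
by rewrite /closed_walk /strict_trail /= eq_sym xu ua xa xb ub !inE ab eqxx.
Qed.

Variables (A : rel E) (r : E).
Hypothesis A_D3 : forall a b, A a b -> D3 inc a b.
Hypothesis A_to_r : forall e, connect A e r.

Lemma closed_trail_grow (v0 : V) (T : seq (E * V)) (e : E) :
  closed_walk inc v0 T -> strict_trail inc v0 T -> r \in map fst T ->
  e \notin map fst T ->
  exists T', [/\ closed_walk inc v0 T', strict_trail inc v0 T',
                 r \in map fst T' & size T' = (size T).+1].
Proof.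
case/andP=> /andP[vT T_ge2] /eqP lastT /andP[_ uT] rT eT.
have [a [b [aT bT ab]]] := connect_cross (A_to_r e) eT rT.
have [T' [vT' lastT' permT']] := walk_insert_D3 (A_D3 ab) vT bT.
have sizeT' : size T' = (size T).+1.
  by rewrite -(size_map fst) (perm_size permT') /= size_map.
exists T'; split=> //.
- by rewrite /closed_walk vT' sizeT' ltnW //= lastT' lastT.
- by rewrite /strict_trail vT' (perm_uniq permT') /= aT.
- by rewrite (perm_mem permT') in_cons rT orbT.
Qed.

Lemma closed_trail_eulerian (v0 : V) (T : seq (E * V)) :
  closed_walk inc v0 T -> strict_trail inc v0 T -> r \in map fst T ->
  eulerian inc.
Proof.
have [n] := ubnP (#|E| - size T); elim: n T => // n IHn T.
move=> T_lt closedT trailT rT.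
have [allT | /allPn[e _ eT]] := boolP (all (mem (map fst T)) (enum E)).
  by exists v0, T; rewrite /euler_tour closedT trailT.
have [T' [closedT' trailT' rT' sizeT']] := closed_trail_grow closedT trailT rT eT.
have T'_le : size T' <= #|E|.
  by case/andP: trailT' => _ /card_uniqP; rewrite size_map => <-; apply: max_card.
by apply: (IHn T' _ closedT' trailT' rT'); lia.
Qed.

End Hypergraph.

Theorem corollary2p10 (V E : finType) (inc : E -> {set V}) :
  hypergraph_ok inc ->
  has_nontrivial_spanning_arborescence (D3 inc) ->
  eulerian inc.
Proof.
move=> _ [E_ge2 [A [r [A_D3 _ _ A_to_r]]]].
have [x] : exists x, x \in [set~ r].
  by apply/set0Pn; rewrite -card_gt0 cardsC1; lia.
rewrite !inE => xr.
have [a [b]] := connect_cross (S := pred1 r) (A_to_r x) xr (eqxx r).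
rewrite !inE => -[ar /eqP-> /A_D3 D3ar].
have [v0 [T [closedT trailT edgesT]]] := closed_trail_of_D3 ar D3ar.
apply: closed_trail_eulerian A_D3 A_to_r _ _ closedT trailT _.
by rewrite edgesT !inE eqxx orbT.
Qed.
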